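(* Under Conditions 1 and 2, for every $\vartheta>0$ there exist constants $n_\vartheta\ge1$ and $\epsilon>0$ such that for all $n\ge n_\vartheta$ and all $u\in\mathbb R$ with $|u|\ge\vartheta$, $$\Big|1-\lambda^{(n)}m^{(n)}\int_0^\infty e^{\mathrm iut}\,\bar\Lambda^{(n)}_\beta(t)\,dt\Big|\ge\epsilon .$$
   Context: Notation: $\mathbb Z_+=\{1,2,\dots\}$, $\mathbb R_+=[0,\infty)$. For each $n\ge1$: $\lambda^{(n)}>0$; a probability $\Lambda^{(n)}$ on $\mathbb R_+$ with tail $\bar\Lambda^{(n)}(t)=\Lambda^{(n)}((t,\infty))$, $\eta^{(n)}=\int_0^\infty y\Lambda^{(n)}(dy)$, $\sigma^{(n)}=\frac12\int_0^\infty y^2\Lambda^{(n)}(dy)$ finite; probability laws $(p_k^{(n)})_{k\ge1}$, $(q_k^{(n)})_{k\ge1}$ on $\mathbb Z_+$ with generating functions $g^{(n)},h^{(n)}$, $m^{(n)}=\sum_kkp_k^{(n)}<\infty$; $\gamma_n>0$ with $\gamma_n\to\infty$, $\gamma_n/n\to\gamma_*\in[0,\infty)$. $\phi^{(n)}(z)=n\gamma_n[g^{(n)}(1-z/n)-(1-z/n)]$, $\psi^{(n)}(z)=\gamma_n[1-h^{(n)}(1-z/n)]$ for $z\in[0,n]$. Condition 1: (i) $\lambda^{(n)}\to\lambda>0$, $\eta^{(n)}\to\eta>0$, $\sigma^{(n)}\to\sigma>0$, $\gamma_n(1-\lambda^{(n)}\eta^{(n)})\to b\in\mathbb R$; (ii)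 $\psi^{(n)}\to\psi$ uniformly on compacts of $[0,\infty)$; (iii) $\{\phi^{(n)}\}$ is uniformly Lipschitz on bounded intervals and converges uniformly on compacts to a continuous $\phi$. Under Condition 1, $\lambda\eta=1$ and $m:=\lim_n\gamma_n(1-m^{(n)})$ exists (so $\gamma_n(1-\lambda^{(n)}\eta^{(n)}m^{(n)})\to b+m$). Condition 2 (for some $\alpha\in(1,2)$): (1) there are $C,k_0>0$ with $n\gamma_n\sum_{k\ge k_0}(k/n)^\alpha p^{(n)}_k+\sum_kk^\alpha q^{(n)}_k\le C$ for all $n$, and $\lim_{k_1\to\infty}\limsup_n\gamma_n\sum_{k\ge k_1}kp^{(n)}_k=0$; (2) there are $C_0>0$ and a probability $\Lambda^*$ on $\mathbb R_+$ with $\int t^{2\alpha}\Lambda^*(dt)<\infty$ and $\bar\Lambda^{(n)}\le C_0\bar\Lambda^*$ for all $n$. Fix $\beta\in[0,\infty)$ with $\beta>-(b+m)/(\sigma\lambda)$. Define $\bar\Lambda_\beta^{(n)}(t)=e^{-\beta t/\gamma_n}\bar\Lambda^{(n)}(t)$. *)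

From Stdlib Require Import Reals Lra Lia.
Open Scope R_scope.

(* Tail function t |-> Lambda((t,oo)) of a probability measure Lambda on R_+.
   Extended by 1 on (-oo,0).  Such functions are in bijection with probability
   measures on R_+ (CDF = 1 - tail). *)
Definition is_tail (F : R -> R) : Prop :=
  (forall t, 0 <= F t <= 1) /\
  (forall t, t < 0 -> F t = 1) /\
  (forall s t, s <= t -> F t <= F s) /\
  (forall t eps, 0 < eps -> exists d, 0 < d /\ forall s, t <= s < t + d -> Rabs (F s - F t) < eps) /\
  (forall eps, 0 < eps -> exists M, forall t, M <= t -> F t < eps).

Definition improper_int0 (f : R -> R) (L : R) : Prop :=
  forall eps, 0 < eps -> exists M, 0 <= M /\
    forall T, M <= T -> exists pr : Riemann_integrable f 0 T, Rabs (RiemannInt pr - L) < eps.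

Definition prob_Zplus (p : nat -> R) : Prop :=
  p 0%nat = 0 /\ (forall k, 0 <= p k) /\ infinite_sum p 1.

(* x^a for x >= 0, a > 0 (with 0^a = 0) *)
Definition powr (x a : R) : R := if Rle_dec x 0 then 0 else Rpower x a.

Definition phi_n (gam : nat -> R) (g : nat -> R -> R) (n : nat) (z : R) : R :=
  INR n * gam n * (g n (1 - z / INR n) - (1 - z / INR n)).

Definition psi_n (gam : nat -> R) (h : nat -> R -> R) (n : nat) (z : R) : R :=
  gam n * (1 - h n (1 - z / INR n)).

(* f_n -> f uniformly on compacts of [0,oo) (f_n being defined on [0,n]) *)
Definition unif_cv_compacts (f : nat -> R -> R) (lim : R -> R) : Prop :=
  forall K eps, 0 <= K -> 0 < eps -> exists N, forall n, (N <= n)%nat ->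
    forall z, 0 <= z <= K -> z <= INR n -> Rabs (f n z - lim z) < eps.

(* {f_n}_{n>=1} uniformly Lipschitz on bounded intervals of [0,oo) (f_n on [0,n]) *)
Definition unif_lipschitz_bounded (f : nat -> R -> R) : Prop :=
  forall K, 0 <= K -> exists L, forall n, (1 <= n)%nat ->
    forall z1 z2, 0 <= z1 <= K -> 0 <= z2 <= K -> z1 <= INR n -> z2 <= INR n ->
      Rabs (f n z1 - f n z2) <= L * Rabs (z1 - z2).

Definition continuous_on_Rplus (f : R -> R) : Prop :=
  forall z eps, 0 <= z -> 0 < eps -> exists d, 0 < d /\
    forall y, 0 <= y -> Rabs (y - z) < d -> Rabs (f y - f z) < eps.

(* Since [lam eta m -> 1],
   it suffices to bound [\int (1 - cos(ut)) e^{-beta t/gam} barL(t) dt] below uniformly.  On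
   [0,a] the integrand is at least [barL(a) e^{-beta a} (1 - cos(ut))], and
   [\int_0^a (1 - cos(ut)) dt = a (1 - sinc(ua))] stays away from 0 when [|u| >= theta].
   Finally [barL(a)] is bounded below uniformly in [n], because the means [eta_n] stay away from
   0 while the second moments [sigma_n] stay bounded. *)
From Stdlib Require Import Reals Lra Lia.
From Coquelicot Require Import Coquelicot.
Open Scope R_scope.

Lemma ex_RInt_sub (f : R -> R) a b c d :
  a <= b -> b <= c -> c <= d -> ex_RInt f a d -> ex_RInt f b c.
Proof.
  intros Hab Hbc Hcd Hf.
  apply (ex_RInt_Chasles_2 (V:=R_CompleteNormedModule) f a b c); [lra|].
  apply (ex_RInt_Chasles_1 (V:=R_CompleteNormedModule) f a c d); [lra|exact Hf].
Qed.

Lemma RInt_le_const (f : R -> R) a b c : a <= b -> ex_RInt f a b ->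
  (forall x, a < x < b -> f x <= c) -> RInt f a b <= (b - a) * c.
Proof.
  intros Hab Hf H.
  replace ((b - a) * c) with (RInt (fun _ => c) a b) by (rewrite RInt_const; reflexivity).
  apply RInt_le; auto. apply ex_RInt_const.
Qed.

Lemma improper_int0_ex_RInt (f : R -> R) L e : improper_int0 f L -> 0 < e ->
  exists M, forall T, M <= T -> ex_RInt f 0 T /\ Rabs (RInt f 0 T - L) < e.
Proof.
  intros H He. destruct (H e He) as [M [_ HT]]. exists M.
  intros T HMT. destruct (HT T HMT) as [pr Hpr]. split.
  - apply ex_RInt_Reals_1; exact pr.
  - rewrite (RInt_Reals _ _ _ pr); exact Hpr.
Qed.

Lemma improper_int0_le_affine (f g : R -> R) L L' c k M0 : 0 <= k ->
  improper_int0 f L -> improper_int0 g L' ->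
  (forall T, M0 <= T -> ex_RInt f 0 T -> ex_RInt g 0 T -> RInt f 0 T <= c + k * RInt g 0 T) ->
  L <= c + k * L'.
Proof.
  intros Hk Hf Hg Hfg. apply Rle_plus_epsilon. intros eps Heps.
  set (e := eps / (1 + k)).
  assert (He : 0 < e) by (apply Rdiv_lt_0_compat; lra).
  destruct (improper_int0_ex_RInt f L e Hf He) as [M1 HM1].
  destruct (improper_int0_ex_RInt g L' e Hg He) as [M2 HM2].
  set (T := Rmax M0 (Rmax M1 M2)).
  destruct (HM1 T) as [Ef Hf']; [unfold T; rewrite Rmax_Rle, Rmax_Rle; auto with real|].
  destruct (HM2 T) as [Eg Hg']; [unfold T; rewrite Rmax_Rle, Rmax_Rle; auto with real|].
  assert (Hle := Hfg T (Rmax_l _ _) Ef Eg).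
  apply Rabs_def2 in Hf'. apply Rabs_def2 in Hg'.
  assert (k * RInt g 0 T <= k * (L' + e)) by (apply Rmult_le_compat_l; lra).
  assert (Heps' : eps = e * (1 + k)) by (unfold e; field; lra).
  nra.
Qed.

Lemma tail_RInt_bound (F : R -> R) a M T : is_tail F -> 0 < a -> a <= M -> M <= T ->
  ex_RInt F 0 T -> ex_RInt (fun t => t * F t) 0 T ->
  RInt F 0 T <= a + (M - a) * F a + / M * RInt (fun t => t * F t) 0 T.
Proof.
  intros [HF01 [_ [Hmon _]]] Ha HaM HMT ExF ExS.
  set (S := fun t => t * F t).
  assert (ExF1 : ex_RInt F 0 a) by (apply ex_RInt_sub with 0 T; lra || assumption).
  assert (ExF2 : ex_RInt F a M) by (apply ex_RInt_sub with 0 T; lra || assumption).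
  assert (ExF3 : ex_RInt F M T) by (apply ex_RInt_sub with 0 T; lra || assumption).
  assert (ExS1 : ex_RInt S 0 M) by (apply ex_RInt_sub with 0 T; lra || assumption).
  assert (ExS2 : ex_RInt S M T) by (apply ex_RInt_sub with 0 T; lra || assumption).
  rewrite <- (RInt_Chasles (V:=R_CompleteNormedModule) F 0 a T ExF1)
    by (apply ex_RInt_sub with 0 T; lra || assumption).
  rewrite <- (RInt_Chasles (V:=R_CompleteNormedModule) F a M T ExF2 ExF3).
  rewrite <- (RInt_Chasles (V:=R_CompleteNormedModule) S 0 M T ExS1 ExS2).
  assert (B1 : RInt F 0 a <= (a - 0) * 1).
  { apply RInt_le_const; auto; try lra. intros x _; apply HF01. }
  assert (B2 : RInt F a M <= (M - a) * F a).
  { apply RInt_le_const; auto. intros x Hx. apply Hmon; lra. }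
  assert (S0 : 0 <= RInt S 0 M).
  { apply RInt_ge_0; auto; try lra. intros x Hx. apply Rmult_le_pos; [lra|apply HF01]. }
  (* On [M, oo) one has [F t <= t F(t) / M]. *)
  assert (B3 : RInt F M T <= / M * RInt S M T).
  { replace (/ M * RInt S M T) with (RInt (fun t => / M * S t) M T)
      by (apply (RInt_scal (V:=R_CompleteNormedModule)); exact ExS2).
    apply RInt_le; auto.
    - apply (ex_RInt_scal (V:=R_NormedModule)); exact ExS2.
    - intros x Hx. destruct (HF01 x) as [H0 _]. unfold S.
      apply Rmult_le_reg_l with M; [lra|].
      rewrite <- Rmult_assoc, Rinv_r, Rmult_1_l by lra. apply Rmult_le_compat_r; lra. }
  assert (0 <= / M * RInt S 0 M) by (apply Rmult_le_pos; [left; apply Rinv_0_lt_compat|]; lra).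
  rewrite Rmult_plus_distr_l. unfold plus; simpl. lra.
Qed.

Lemma tail_mean_bound (F : R -> R) eta sig a M : is_tail F ->
  improper_int0 F eta -> improper_int0 (fun t => t * F t) sig -> 0 < a -> a <= M ->
  eta <= a + (M - a) * F a + / M * sig.
Proof.
  intros HF Heta Hsig Ha HaM.
  apply improper_int0_le_affine with F (fun t => t * F t) M; auto.
  - left; apply Rinv_0_lt_compat; lra.
  - intros T HMT ExF ExS. apply tail_RInt_bound; auto.
Qed.

Lemma tail_bounded_below_uniformly eta0 sig0 : 0 < eta0 ->
  exists a kap, 0 < a /\ 0 < kap /\
    forall F eta sig, is_tail F -> improper_int0 F eta -> improper_int0 (fun t => t * F t) sig ->
      eta0 <= eta -> sig <= sig0 -> kap <= F a.
Proof.
  intros Heta0.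
  set (a := eta0 / 4). set (M := Rmax a (4 * sig0 / eta0)).
  assert (Ha : 0 < a) by (unfold a; lra).
  assert (HaM : a <= M) by apply Rmax_l.
  assert (HM : 0 < M) by lra.
  exists a, (eta0 / (2 * M)). split; [exact Ha|]. split; [apply Rdiv_lt_0_compat; lra|].
  intros F eta sig HF Heta Hsig Hle Hsig0.
  assert (Hmean := tail_mean_bound F eta sig a M HF Heta Hsig Ha HaM).
  assert (HFa : 0 <= F a) by apply (proj1 HF).
  assert (Hsig1 : / M * sig <= eta0 / 4).
  { assert (4 * sig0 / eta0 <= M) by apply Rmax_r.
    apply Rmult_le_reg_l with M; [lra|].
    rewrite <- Rmult_assoc, Rinv_r, Rmult_1_l by lra.
    apply Rmult_le_reg_l with (4 / eta0); [apply Rdiv_lt_0_compat; lra|].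
    replace (4 / eta0 * (M * (eta0 / 4))) with M by (field; lra).
    replace (4 / eta0 * sig) with (4 * sig / eta0) by (field; lra).
    apply Rle_trans with (4 * sig0 / eta0); [|assumption].
    unfold Rdiv. apply Rmult_le_compat_r; [left; apply Rinv_0_lt_compat|]; lra. }
  assert (Hgap : eta0 / 2 <= M * F a).
  { assert ((M - a) * F a <= M * F a) by (apply Rmult_le_compat_r; lra). unfold a in *; lra. }
  apply Rmult_le_reg_l with (2 * M); [lra|].
  replace (2 * M * (eta0 / (2 * M))) with eta0 by (field; lra). lra.
Qed.

Lemma damped_cos_le c w x K : -1 <= c <= 1 -> 0 <= w <= 1 -> 0 <= x -> K <= w * x ->
  c * (w * x) <= x - K * (1 - c).
Proof. intros Hc Hw Hx HK. nra. Qed.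

Lemma exp_le x y : x <= y -> exp x <= exp y.
Proof. intros [H|H]; [left; apply exp_increasing; exact H|subst; lra]. Qed.

Lemma exp_damping_bounds beta t g a : 0 <= beta -> 0 <= t <= a -> 1 <= g ->
  exp (- beta * a) <= exp (- beta * t / g) <= 1.
Proof.
  intros Hb Ht Hg. rewrite <- exp_0.
  assert (Hbt : 0 <= beta * t) by nra.
  assert (Hdiv : beta * t / g <= beta * t).
  { unfold Rdiv. rewrite <- (Rmult_1_r (beta * t)) at 2.
    apply Rmult_le_compat_l; [lra|]. rewrite <- Rinv_1. apply Rinv_le_contravar; lra. }
  assert (0 <= beta * t / g) by (apply Rdiv_le_0_compat; lra).
  split; apply exp_le; unfold Rdiv in *; nra.
Qed.

Lemma is_RInt_one_minus_cos u a : u <> 0 -> is_RInt (fun t => 1 - cos (u * t)) 0 a (a - sin (u * a) / u).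
Proof.
  intros Hu.
  replace (a - sin (u * a) / u) with (minus ((fun t => t - sin (u * t) / u) a) ((fun t => t - sin (u * t) / u) 0))
    by (unfold minus, plus, opp; simpl; rewrite Rmult_0_r, sin_0; field; auto).
  apply (is_RInt_derive (V:=R_CompleteNormedModule) (fun t => t - sin (u * t) / u)).
  - intros x _. auto_derive; auto. field. auto.
  - intros x _. apply (continuous_minus (K:=R_AbsRing) (V:=R_NormedModule)); [apply continuous_const|].
    apply continuous_comp with (f := fun t => u * t) (g := cos); [|apply continuous_cos].
    apply (continuous_scal_r (K:=R_AbsRing) (V:=R_NormedModule)). apply continuous_id.
Qed.

Section CosineTransform.

Variables (F : R -> R) (u beta g a : R).
Hypotheses (HF : is_tail F) (Hbeta : 0 <= beta) (Hg : 1 <= g) (Ha : 0 < a) (Hu : u <> 0).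

Let G t := cos (u * t) * (exp (- beta * t / g) * F t).
Let K := F a * exp (- beta * a).

Lemma damped_cos_tail_le t : 0 <= t -> G t <= F t.
Proof.
  intros Ht. destruct HF as [HF01 _]. unfold G.
  pose proof (COS_bound (u * t)). pose proof (exp_pos (- beta * t / g)).
  destruct (exp_damping_bounds beta t g t) as [_ Hhi]; try lra.
  enough (cos (u * t) * (exp (- beta * t / g) * F t) <= F t - 0 * (1 - cos (u * t))) by lra.
  apply damped_cos_le; try lra; [apply HF01|]. apply Rmult_le_pos; [lra|apply HF01].
Qed.

Lemma damped_cos_tail_le_initial t : 0 <= t <= a -> G t <= F t - K * (1 - cos (u * t)).
Proof.
  intros Ht. destruct HF as [HF01 [_ [Hmon _]]]. unfold G.
  pose proof (COS_bound (u * t)).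
  destruct (exp_damping_bounds beta t g a) as [Hlo Hhi]; try lra.
  apply damped_cos_le; try lra; [pose proof (exp_pos (- beta * t / g)); lra|apply HF01|].
  unfold K. rewrite Rmult_comm.
  apply Rmult_le_compat; [left; apply exp_pos|apply HF01|lra|apply Hmon; lra].
Qed.

Lemma cos_transform_RInt_bound T : a <= T -> ex_RInt F 0 T -> ex_RInt G 0 T ->
  RInt G 0 T <= - (K * (a - sin (u * a) / u)) + 1 * RInt F 0 T.
Proof.
  intros HaT ExF ExG.
  assert (ExF1 : ex_RInt F 0 a) by (apply ex_RInt_sub with 0 T; lra || assumption).
  assert (ExF2 : ex_RInt F a T) by (apply ex_RInt_sub with 0 T; lra || assumption).
  assert (ExG1 : ex_RInt G 0 a) by (apply ex_RInt_sub with 0 T; lra || assumption).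
  assert (ExG2 : ex_RInt G a T) by (apply ex_RInt_sub with 0 T; lra || assumption).
  assert (HC := is_RInt_one_minus_cos u a Hu).
  assert (ExC : ex_RInt (fun t => K * (1 - cos (u * t))) 0 a)
    by (apply (ex_RInt_scal (V:=R_NormedModule)); eexists; exact HC).
  assert (EC : RInt (fun t => K * (1 - cos (u * t))) 0 a = K * (a - sin (u * a) / u)).
  { replace (RInt (fun t => K * (1 - cos (u * t))) 0 a) with (K * RInt (fun t => 1 - cos (u * t)) 0 a)
      by (symmetry; apply (RInt_scal (V:=R_CompleteNormedModule)); eexists; exact HC).
    f_equal. apply (is_RInt_unique (V:=R_CompleteNormedModule)); exact HC. }
  assert (B1 : RInt G 0 a <= RInt F 0 a - K * (a - sin (u * a) / u)).
  { rewrite <- EC.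
    replace (RInt F 0 a - RInt (fun t => K * (1 - cos (u * t))) 0 a)
      with (RInt (fun t => F t - K * (1 - cos (u * t))) 0 a)
      by (apply (RInt_minus (V:=R_CompleteNormedModule)); assumption).
    apply RInt_le; [lra|auto|apply (ex_RInt_minus (V:=R_NormedModule)); auto|].
    intros t Ht. apply damped_cos_tail_le_initial; lra. }
  assert (B2 : RInt G a T <= RInt F a T).
  { apply RInt_le; auto. intros t Ht. apply damped_cos_tail_le; lra. }
  rewrite <- (RInt_Chasles (V:=R_CompleteNormedModule) G 0 a T ExG1 ExG2).
  rewrite <- (RInt_Chasles (V:=R_CompleteNormedModule) F 0 a T ExF1 ExF2).
  unfold plus; simpl. lra.
Qed.

Lemma cos_transform_bound eta A : improper_int0 F eta -> improper_int0 G A ->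
  A <= eta - F a * exp (- beta * a) * (a - sin (u * a) / u).
Proof.
  intros Heta HA.
  replace (eta - F a * exp (- beta * a) * (a - sin (u * a) / u))
    with (- (K * (a - sin (u * a) / u)) + 1 * eta) by (unfold K; ring).
  apply improper_int0_le_affine with G F a; auto; [lra|].
  intros T HaT ExG ExF. apply cos_transform_RInt_bound; auto.
Qed.

End CosineTransform.

Lemma sin_le_quintic x : 0 <= x <= 4 -> sin x <= x - x ^ 3 / 6 + x ^ 5 / 120.
Proof.
  intros Hx. destruct (pre_sin_bound x 0 ltac:(lra) ltac:(lra)) as [_ H].
  unfold sin_approx, sin_term in H. cbn in H. lra.
Qed.

Lemma sinc_gap x0 : 0 < x0 -> exists d, 0 < d /\ forall x, x0 <= x -> sin x / x <= 1 - d.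
Proof.
  intros Hx0. exists (Rmin (1 / 2) (2 * x0 ^ 2 / 15)). split.
  { apply Rmin_glb_lt; [lra|]. assert (0 < x0 ^ 2) by (apply pow_lt; lra). lra. }
  intros x Hx. pose proof (Rmin_l (1 / 2) (2 * x0 ^ 2 / 15)). pose proof (Rmin_r (1 / 2) (2 * x0 ^ 2 / 15)).
  set (m := Rmin (1 / 2) (2 * x0 ^ 2 / 15)) in *.
  apply Rmult_le_reg_r with x; [lra|]. unfold Rdiv. rewrite Rmult_assoc, Rinv_l, Rmult_1_r by lra.
  destruct (Rle_or_lt 2 x) as [H2|H2].
  - pose proof (SIN_bound x). nra.
  (* For [x <= 2], [x^5/120 <= x^3/30], so [sin x <= x - 2 x^3/15]. *)
  - pose proof (sin_le_quintic x ltac:(lra)).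
    assert (x0 ^ 2 <= x ^ 2) by (apply pow_incr; lra).
    assert (x ^ 5 <= x ^ 3 * 4) by (replace (x ^ 5) with (x ^ 3 * x ^ 2) by ring;
                                    apply Rmult_le_compat_l; [apply pow_le|]; nra).
    assert (m * x <= 2 * x0 ^ 2 / 15 * x) by (apply Rmult_le_compat_r; lra).
    assert (x0 ^ 2 * x <= x ^ 2 * x) by (apply Rmult_le_compat_r; lra).
    replace (x ^ 3) with (x ^ 2 * x) in * by ring. lra.
Qed.

Lemma one_minus_sinc_lower u a theta d : 0 < a -> 0 < theta -> theta <= Rabs u ->
  (forall x, theta * a <= x -> sin x / x <= 1 - d) -> a * d <= a - sin (u * a) / u.
Proof.
  intros Ha Ht Hu Hd.
  assert (Hs := Hd (Rabs u * a) ltac:(apply Rmult_le_compat_r; lra)).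
  assert (Hu0 : u <> 0) by (intro Z; rewrite Z, Rabs_R0 in Hu; lra).
  assert (E : sin (u * a) / u = a * (sin (Rabs u * a) / (Rabs u * a))).
  { destruct (Rle_or_lt 0 u) as [H|H].
    - rewrite Rabs_pos_eq by lra. field; split; auto; lra.
    - rewrite Rabs_left by lra. replace (- u * a) with (- (u * a)) by ring.
      rewrite sin_neg. field; split; auto; lra. }
  rewrite E. nra.
Qed.

Lemma cos_transform_gap (F : R -> R) u beta g a theta d kap eta A :
  is_tail F -> 0 <= beta -> 1 <= g -> 0 < a -> 0 < theta -> theta <= Rabs u -> 0 <= d ->
  (forall x, theta * a <= x -> sin x / x <= 1 - d) -> 0 <= kap <= F a ->
  improper_int0 F eta -> improper_int0 (fun t => cos (u * t) * (exp (- beta * t / g) * F t)) A ->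
  A <= eta - kap * exp (- beta * a) * (a * d).
Proof.
  intros HF Hbeta Hg Ha Htheta Hu Hd Hsinc Hkap Heta HA.
  assert (Hu0 : u <> 0) by (intro Z; rewrite Z, Rabs_R0 in Hu; lra).
  assert (HI := one_minus_sinc_lower u a theta d Ha Htheta Hu Hsinc).
  assert (HA' := cos_transform_bound F u beta g a HF Hbeta Hg Ha Hu0 eta A Heta HA).
  pose proof (exp_pos (- beta * a)).
  assert (kap * exp (- beta * a) * (a * d) <= F a * exp (- beta * a) * (a - sin (u * a) / u))
    by (apply Rmult_le_compat; nra).
  lra.
Qed.

Lemma Un_cv_1_of_scaled_defect (gam x : nat -> R) l :
  Un_cv (fun n => gam n * (1 - x n)) l -> cv_infty gam -> Un_cv x 1.
Proof.
  intros Hc Hg eps Heps.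
  destruct (Hc 1 Rlt_0_1) as [N1 HN1].
  destruct (Hg ((Rabs l + 1) / eps)) as [N2 HN2].
  exists (Nat.max N1 N2). intros n Hn.
  assert (H1 := HN1 n ltac:(lia)). assert (H2 := HN2 n ltac:(lia)).
  unfold R_dist in *.
  assert (Hq : 0 < (Rabs l + 1) / eps) by (apply Rdiv_lt_0_compat; [pose proof (Rabs_pos l)|]; lra).
  assert (Hb : Rabs (gam n * (1 - x n)) < Rabs l + 1) by (pose proof (Rabs_triang_inv (gam n * (1 - x n)) l); lra).
  rewrite Rabs_mult, (Rabs_pos_eq (gam n)), <- Rabs_Ropp in Hb by lra.
  replace (- (1 - x n)) with (x n - 1) in Hb by ring.
  apply Rmult_lt_reg_l with (gam n); [lra|].
  apply Rlt_trans with (Rabs l + 1); auto.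
  apply Rmult_lt_reg_r with (/ eps); [apply Rinv_0_lt_compat; auto|].
  rewrite Rmult_assoc, Rinv_r, Rmult_1_r by lra. exact H2.
Qed.

Lemma le_sqrt_sum_sq e X Y : 0 <= e -> e <= X -> e <= sqrt (X ^ 2 + Y ^ 2).
Proof.
  intros He HX. rewrite <- (sqrt_pow2 e He).
  apply sqrt_le_1_alt. pose proof (pow2_ge_0 Y). simpl. nra.
Qed.

Theorem proposition5p10
  (lam : nat -> R) (barL : nat -> R -> R) (eta_n sigma_n : nat -> R)
  (p q : nat -> nat -> R) (g h : nat -> R -> R) (mm : nat -> R)
  (gam : nat -> R) (gstar : R)
  (lam0 eta0 sigma0 b : R) (psi phi : R -> R) (mlim : R)
  (alpha beta : R)
  (* standing assumptions *)
  (Hlam_pos : forall n, (1 <= n)%nat -> 0 < lam n)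
  (HbarL : forall n, (1 <= n)%nat -> is_tail (barL n))
  (Heta : forall n, (1 <= n)%nat -> improper_int0 (barL n) (eta_n n))
  (Hsigma : forall n, (1 <= n)%nat -> improper_int0 (fun t => t * barL n t) (sigma_n n))
  (Hp : forall n, (1 <= n)%nat -> prob_Zplus (p n))
  (Hq : forall n, (1 <= n)%nat -> prob_Zplus (q n))
  (Hg : forall n s, (1 <= n)%nat -> 0 <= s <= 1 -> infinite_sum (fun k => p n k * s ^ k) (g n s))
  (Hh : forall n s, (1 <= n)%nat -> 0 <= s <= 1 -> infinite_sum (fun k => q n k * s ^ k) (h n s))
  (Hm : forall n, (1 <= n)%nat -> infinite_sum (fun k => INR k * p n k) (mm n))
  (Hgam_pos : forall n, (1 <= n)%nat -> 0 < gam n)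
  (Hgam_inf : cv_infty gam)
  (Hgstar : Un_cv (fun n => gam n / INR n) gstar) (Hgstar0 : 0 <= gstar)
  (* Condition 1 *)
  (H1lam : Un_cv lam lam0) (H1lam0 : 0 < lam0)
  (H1eta : Un_cv eta_n eta0) (H1eta0 : 0 < eta0)
  (H1sigma : Un_cv sigma_n sigma0) (H1sigma0 : 0 < sigma0)
  (H1b : Un_cv (fun n => gam n * (1 - lam n * eta_n n)) b)
  (H1psi : unif_cv_compacts (psi_n gam h) psi)
  (H1phi_lip : unif_lipschitz_bounded (phi_n gam g))
  (H1phi_cv : unif_cv_compacts (phi_n gam g) phi)
  (H1phi_cont : continuous_on_Rplus phi)
  (* m := lim gamma_n (1 - m^(n)) (exists under Condition 1) *)
  (Hmlim : Un_cv (fun n => gam n * (1 - mm n)) mlim)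
  (* Condition 2 *)
  (H2alpha : 1 < alpha < 2)
  (H2a : exists C (k0 : nat), 0 < C /\ (0 < k0)%nat /\
     forall n N, (1 <= n)%nat ->
       INR n * gam n * sum_f_R0 (fun k => if Nat.leb k0 k
                                          then Rpower (INR k / INR n) alpha * p n k else 0) N
       + sum_f_R0 (fun k => powr (INR k) alpha * q n k) N <= C)
  (H2b : forall eps, 0 < eps -> exists K1 : nat, forall k1 : nat, (K1 <= k1)%nat ->
     exists N0 : nat, forall n, (N0 <= n)%nat -> forall N,
       gam n * sum_f_R0 (fun k => if Nat.leb k1 k then INR k * p n k else 0) N <= eps)
  (H2c : exists (C0 : R) (barstar : R -> R), 0 < C0 /\ is_tail barstar /\
     (exists M, improper_int0 (fun t => 2 * alpha * powr t (2 * alpha - 1) * barstar t) M) /\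
     forall n t, (1 <= n)%nat -> 0 <= t -> barL n t <= C0 * barstar t)
  (* beta *)
  (Hbeta0 : 0 <= beta)
  (Hbeta : - (b + mlim) / (sigma0 * lam0) < beta) :
  forall theta, 0 < theta ->
    exists (ntheta : nat) (eps : R), (1 <= ntheta)%nat /\ 0 < eps /\
      forall n, (ntheta <= n)%nat -> forall u, theta <= Rabs u ->
        forall A B,
          improper_int0 (fun t => cos (u * t) * (exp (- beta * t / gam n) * barL n t)) A ->
          improper_int0 (fun t => sin (u * t) * (exp (- beta * t / gam n) * barL n t)) B ->
          eps <= sqrt ((1 - lam n * mm n * A) ^ 2 + (lam n * mm n * B) ^ 2).
Proof.
  intros theta Htheta.
  assert (Hm1 : Un_cv mm 1) by exact (Un_cv_1_of_scaled_defect gam mm mlim Hmlim Hgam_inf).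
  assert (Hc : Un_cv (fun n => lam n * mm n) lam0)
    by (rewrite <- (Rmult_1_r lam0); apply CV_mult; auto).
  assert (Hce : Un_cv (fun n => lam n * eta_n n * mm n) 1).
  { rewrite <- (Rmult_1_r 1). apply CV_mult; [|exact Hm1].
    exact (Un_cv_1_of_scaled_defect gam (fun n => lam n * eta_n n) b H1b Hgam_inf). }
  destruct (tail_bounded_below_uniformly (eta0 / 2) (sigma0 + 1) ltac:(lra)) as [a [kap [Ha [Hkap Htail]]]].
  destruct (sinc_gap (theta * a) ltac:(nra)) as [d [Hd Hsinc]].
  set (gap := kap * exp (- beta * a) * (a * d)).
  assert (Hgap : 0 < gap) by (pose proof (exp_pos (- beta * a)); unfold gap; apply Rmult_lt_0_compat; nra).
  (* Eventually [lam mm >= lam0 / 2] and [lam eta mm <= 1 + eps], so [1 - lam mm A >= lam0 gap / 2 - eps = eps]. *)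
  set (eps := lam0 * gap / 4).
  assert (Heps : 0 < eps) by (unfold eps; nra).
  destruct (Hc (lam0 / 2) ltac:(lra)) as [N1 HN1].
  destruct (Hce eps Heps) as [N2 HN2].
  destruct (H1eta (eta0 / 2) ltac:(lra)) as [N3 HN3].
  destruct (H1sigma 1 Rlt_0_1) as [N4 HN4].
  destruct (Hgam_inf 1) as [N5 HN5].
  exists (S (Nat.max N1 (Nat.max N2 (Nat.max N3 (Nat.max N4 N5))))), eps.
  split; [lia|split; [exact Heps|]].
  intros n Hn u Hu A B HA HB.
  assert (Hn1 : (1 <= n)%nat) by lia.
  specialize (HN1 n ltac:(lia)); specialize (HN2 n ltac:(lia)); specialize (HN3 n ltac:(lia));
    specialize (HN4 n ltac:(lia)); specialize (HN5 n ltac:(lia)).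
  unfold R_dist in *; apply Rabs_def2 in HN1, HN2, HN3, HN4.
  assert (Hkapa : kap <= barL n a) by (apply Htail with (eta_n n) (sigma_n n); auto; lra).
  assert (HAle := cos_transform_gap (barL n) u beta (gam n) a theta d kap (eta_n n) A (HbarL n Hn1)
                    Hbeta0 ltac:(lra) Ha Htheta Hu ltac:(lra) Hsinc ltac:(lra) (Heta n Hn1) HA).
  fold gap in HAle.
  apply le_sqrt_sum_sq; [lra|].
  assert (lam n * mm n * A <= lam n * eta_n n * mm n - lam n * mm n * gap) by nra.
  assert (lam0 / 2 * gap <= lam n * mm n * gap) by nra.
  unfold eps in *. lra.
Qed.
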